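(* Let $G$ be a finite simple graph. If $x$ is a minimum cost construction sequence for $G$ (i.e. $\nu(x)=\nu_*(G)$), then $x$ is greedy.
   Context: For a finite simple graph $G=(V,E)$ with $\ell=|V|+|E|$, a construction sequence (c-sequence) is a bijection $x:\{1,\dots,\ell\}\to V\sqcup E$ such that every edge $e=uw$ satisfies $x^{-1}(e)>\max\{x^{-1}(u),x^{-1}(w)\}$. The cost of $x$ is $\nu(x)=\sum_{e=uw\in E}\big(2x^{-1}(e)-x^{-1}(u)-x^{-1}(w)\big)$, and $\nu_*(G)$ is the minimum of $\nu(x)$ over all c-sequences for $G$. A c-sequence $x$ is greedy if for every edge $e=uw$ and every vertex $v\notin\{u,w\}$, either $x^{-1}(v)<\max\{x^{-1}(u),x^{-1}(w)\}$ or $x^{-1}(v)>x^{-1}(e)$. *)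

From mathcomp Require Import all_boot all_order all_algebra.
Set Implicit Arguments. Unset Strict Implicit. Unset Printing Implicit Defensive.

(* A finite simple graph: vertex type V (a finType), adjacency e : rel V,
   symmetric and irreflexive.  Edges are the 2-element vertex sets {u,w}
   with e u w. *)
Definition edgeset (V : finType) (e : rel V) : {set {set V}} :=
  [set s : {set V} | [exists u : V, exists w : V, e u w && (s == [set u; w])]].

Definition edge (V : finType) (e : rel V) := {s : {set V} | s \in edgeset e}.

Definition elt (V : finType) (e : rel V) := (V + edge e)%type.

(* A sequence x : {1..l} -> V ⊔ E, with l = |V|+|E|; position i : 'I_l stands
   for index i+1. *)
Definition seqT (V : finType) (e : rel V) := 'I_#|{: elt e}| -> elt e.

(* x^{-1}(a), with indices in {1,...,l} (0 if a is not hit) *)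
Definition xinv (V : finType) (e : rel V) (x : seqT e) (a : elt e) : nat :=
  if [pick i | x i == a] is Some i then (nat_of_ord i).+1 else 0.

Definition vpos (V : finType) (e : rel V) (x : seqT e) (v : V) : nat :=
  xinv x (inl v).
Definition epos (V : finType) (e : rel V) (x : seqT e) (f : edge e) : nat :=
  xinv x (inr f).

Definition endmax (V : finType) (e : rel V) (x : seqT e) (f : edge e) : nat :=
  \max_(v in val f) vpos x v.

Definition is_cseq (V : finType) (e : rel V) (x : seqT e) : Prop :=
  bijective x /\ forall f : edge e, endmax x f < epos x f.

Definition cost (V : finType) (e : rel V) (x : seqT e) : int :=
  \sum_(f : edge e)
     ((2 * epos x f)%:Z - (\sum_(v in val f) (vpos x v)%:Z))%R.

Definition greedy (V : finType) (e : rel V) (x : seqT e) : Prop :=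
  forall (f : edge e) (v : V), v \notin val f ->
    vpos x v < endmax x f \/ epos x f < vpos x v.

From mathcomp Require Import all_boot all_order all_algebra all_fingroup.
From mathcomp Require Import zify.
Set Implicit Arguments. Unset Strict Implicit.
Import Order.TTheory GRing.Theory Num.Theory.

(* Suppose f = uw is an edge and v a vertex outside f with
   max(x^{-1}(u), x^{-1}(w)) < x^{-1}(v) < x^{-1}(f).  Moving f to the
   position of v, and shifting everything from v up to f one step later,
   gives a new c-sequence in which no vertex comes earlier and v comes
   strictly later.  As the positions of all elements always sum to
   1 + ... + l, the edge positions then sum to at least one less, so the
   terms 2 x^{-1}(f) drop by at least 2 while the subtracted vertex terms
   can only grow: the cost strictly decreases. *)

Definition moveto (p q k : nat) : nat :=
  if k == q then p else if p <= k < q then k.+1 else k.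

Lemma moveto_succ p q k : moveto p.+1 q.+1 k.+1 = (moveto p q k).+1.
Proof. by rewrite /moveto eqSS !ltnS; case: (k == q); case: (p <= k < q). Qed.

Lemma moveto_lt p q l k : p <= q -> q < l -> k < l -> moveto p q k < l.
Proof. by rewrite /moveto; case: (k =P q); case: (boolP (p <= k < q)); lia. Qed.

Lemma moveto_inj p q : p <= q -> injective (moveto p q).
Proof.
rewrite /moveto => pq k1 k2.
by case: (k1 =P q); case: (k2 =P q);
  case: (boolP (p <= k1 < q)); case: (boolP (p <= k2 < q)); lia.
Qed.

Lemma moveto_ge p q k : k != q -> k <= moveto p q k.
Proof. by rewrite /moveto; case: (k =P q); case: (boolP (p <= k < q)); lia. Qed.

Lemma moveto_l p q : p < q -> moveto p q p = p.+1.
Proof. by rewrite /moveto; case: (p =P q); case: (boolP (p <= p < q)); lia. Qed.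

Lemma moveto_mono p q k1 k2 : p <= q -> k1 < k2 -> (k2 = q -> k1 < p) ->
  moveto p q k1 < moveto p q k2.
Proof.
rewrite /moveto.
by case: (k1 =P q); case: (k2 =P q);
  case: (boolP (p <= k1 < q)); case: (boolP (p <= k2 < q)); lia.
Qed.

Section ConstructionSequences.

Variables (V : finType) (e : rel V).
Local Notation l := #|{: elt e}|.
Implicit Types (x y : seqT e) (a : elt e) (f : edge e).

Lemma xinvE x (g : elt e -> 'I_l) : cancel x g -> cancel g x ->
  forall a, xinv x a = (g a).+1.
Proof.
move=> xK gK a; rewrite /xinv; case: pickP => [i /eqP <- | /(_ (g a))].
  by rewrite xK.
by rewrite gK eqxx.
Qed.

Lemma xinv_bij_inj x : bijective x -> injective (xinv x).
Proof.
by case=> g xK gK a b; rewrite !(xinvE xK gK) => -[/val_inj/(can_inj gK)].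
Qed.

Lemma xinv_bij_gt0 x a : bijective x -> 0 < xinv x a.
Proof. by case=> g xK gK; rewrite (xinvE xK gK). Qed.

Lemma xinv_bij_le_card x a : bijective x -> xinv x a <= l.
Proof. by case=> g xK gK; rewrite (xinvE xK gK). Qed.

Lemma sum_xinv_bij x : bijective x ->
  (\sum_a (xinv x a)%:Z = \sum_(i < l) (i.+1)%:Z)%R.
Proof.
case=> g xK gK; rewrite (reindex g); last by exists x => ? _; rewrite ?xK ?gK.
by apply: eq_bigr => a _; rewrite (xinvE xK gK).
Qed.

Lemma cost_edgesE x : cost x =
  (2 * \sum_(f : edge e) (epos x f)%:Z
   - \sum_(f : edge e) \sum_(v in val f) (vpos x v)%:Z)%R.
Proof. by rewrite /cost sumrB mulr_sumr. Qed.

Lemma cost_lt_of_vpos_le x y v : bijective x -> bijective y ->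
  (forall w, vpos x w <= vpos y w) -> vpos x v < vpos y v -> (cost y < cost x)%R.
Proof.
move=> xbij ybij le_xy lt_xy.
have sum_all (z : seqT e) : bijective z ->
    (\sum_w (vpos z w)%:Z + \sum_f (epos z f)%:Z = \sum_(i < l) (i.+1)%:Z)%R.
  by move=> zbij; rewrite -(sum_xinv_bij zbij) big_sumType.
have vsum : (\sum_w (vpos x w)%:Z < \sum_w (vpos y w)%:Z)%R.
  rewrite (bigD1 v) // [ltRHS](bigD1 v) //=.
  by apply: ltr_leD; [rewrite ltz_nat | apply: ler_sum => w _; rewrite lez_nat].
have esum : (\sum_(f : edge e) \sum_(w in val f) (vpos x w)%:Z
    <= \sum_(f : edge e) \sum_(w in val f) (vpos y w)%:Z)%R.
  by apply: ler_sum => f _; apply: ler_sum => w _; rewrite lez_nat.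
have cost_drop (a b c d s1 s2 S : int) : (a + c = S -> b + d = S -> a < b ->
    s1 <= s2 -> 2 * d - s2 < 2 * c - s1)%R by lia.
rewrite !cost_edgesE.
exact: cost_drop (sum_all _ xbij) (sum_all _ ybij) vsum esum.
Qed.

Lemma exists_seq_moveto x p q : bijective x -> 0 < p -> p <= q -> q <= l ->
  exists2 y, bijective y & forall a, xinv y a = moveto p q (xinv x a).
Proof.
case=> g xK gK p_gt0 pq ql.
(* The ordinal i stands for position i.+1, hence the shift by one. *)
have pq' : p.-1 <= q.-1 by lia.
have ql' : q.-1 < l by lia.
pose r (k : 'I_l) := Ordinal (moveto_lt pq' ql' (ltn_ord k)).
have r_inj : injective r by move=> k1 k2 [/(moveto_inj pq')/val_inj].
pose s := perm r_inj.
have yK : cancel (fun i => x (s^-1 i))%g (fun a => s (g a)).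
  by move=> i; rewrite xK permKV.
have gyK : cancel (fun a => s (g a)) (fun i => x (s^-1 i))%g.
  by move=> a; rewrite permK gK.
exists (fun i => x (s^-1 i))%g; first by exists (fun a => s (g a)).
move=> a; rewrite (xinvE yK gyK) (xinvE xK gK) permE /=.
by rewrite -(prednK p_gt0) -[q](@prednK _ (leq_trans p_gt0 pq)) moveto_succ.
Qed.

Lemma vpos_le_endmax x f w : w \in val f -> vpos x w <= endmax x f.
Proof. exact: leq_bigmax_cond. Qed.

Lemma endmax_lt x f n :
  0 < n -> (forall w, w \in val f -> vpos x w < n) -> endmax x f < n.
Proof. by case: n => // n _ lt_n; rewrite ltnS; apply/bigmax_leqP. Qed.

Lemma move_edge_before x f v : is_cseq x -> v \notin val f ->
  endmax x f <= vpos x v <= epos x f ->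
  exists2 y : seqT e,
    is_cseq y & (forall w, vpos x w <= vpos y w) /\ vpos x v < vpos y v.
Proof.
move=> [xbij x_cseq] vf /andP[f_le_v v_le_f].
have xinj := xinv_bij_inj xbij.
have v_lt_f : vpos x v < epos x f.
  by rewrite ltn_neqAle v_le_f andbT; apply/eqP => /xinj.
have ends_lt_v w : w \in val f -> vpos x w < vpos x v.
  move=> wf; rewrite ltn_neqAle (leq_trans (vpos_le_endmax x wf) f_le_v) andbT.
  by apply/eqP => /xinj [wv]; rewrite -wv wf in vf.
have [y ybij yE] := exists_seq_moveto xbij
  (xinv_bij_gt0 _ xbij) v_le_f (xinv_bij_le_card _ xbij).
exists y; last split.
- split=> // g; apply: endmax_lt => [|w wg].
    exact: xinv_bij_gt0.
  rewrite /vpos /epos !yE; apply: moveto_mono (ltnW v_lt_f) _ _.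
    exact: leq_ltn_trans (vpos_le_endmax x wg) (x_cseq g).
  by move=> /xinj [gf]; rewrite gf in wg; apply: ends_lt_v.
- by move=> w; rewrite /vpos yE; apply: moveto_ge; apply/eqP => /xinj.
- by rewrite /vpos yE moveto_l.
Qed.

End ConstructionSequences.

Theorem lemma1 (V : finType) (e : rel V)
  (e_sym : symmetric e) (e_irr : irreflexive e) (x : seqT e) :
  is_cseq x ->
  (forall y : seqT e, is_cseq y -> (cost x <= cost y)%R) ->
  greedy x.
Proof.
move=> x_cseq x_min f v vf.
case: (ltnP (vpos x v) (endmax x f)) => [|f_le_v]; first by left.
case: (ltnP (epos x f) (vpos x v)) => [|v_le_f]; first by right.
have [|y y_cseq [le_xy lt_xy]] := move_edge_before x_cseq vf; first exact/andP.
have := x_min y y_cseq.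
by rewrite leNgt (cost_lt_of_vpos_le x_cseq.1 y_cseq.1 le_xy lt_xy).
Qed.
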